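(* Let $\Gamma$ be a connected signed graph on $N$ vertices. Then $\mathcal{M}(\Gamma(t))$ is a polynomial in $t$ of the form \[ \mathcal{M}(\Gamma(t))=\sum_{k=c(\Gamma_+)-1}^{N-c(\Gamma_-)} a_k(-t)^k,\qquad a_k=\sum_{T\in\mathcal{ST}_k(\Gamma)}|\pi(T)|, \] where all coefficients $a_k$ are non-negative, and the first and last coefficients $a_{c(\Gamma_+)-1}$ and $a_{N-c(\Gamma_-)}$ are strictly positive.
   Context: A signed graph $\Gamma$ is a finite simple undirected graph with vertex set $\{1,\dots,N\}$ in which every edge $\{i,j\}$ carries a nonzero real weight $\gamma_{ij}$, which may be of either sign. $\Gamma_+$ (resp. $\Gamma_-$) is the spanning subgraph on all vertices containing exactly the positively (resp. negatively) weighted edges; $c(H)$ is the number of connected components of a graph $H$. For real $t$, $\Gamma(t)$ is the weighted graph with the same edges as $\Gamma$ and weights $\gamma_{ij}(t)=\gamma_{ij}$ if $\gamma_{ij}>0$ and $\gamma_{ij}(t)=t\gamma_{ij}$ if $\gamma_{ij}<0$. For a tree $T$ with weighted edges, $\pi(T)=\prod_{\{i,j\}\in E(T)}\gamma_{ij}$ (product of weights of $\Gamma$). $\mathcal{ST}(\Gamma)$ is the set of spanning trees of $\Gamma$ and $\mathcal{ST}_k(\Gamma)$ the set of spanning trees having exactly $k$ edges in $\Gamma_-$. For a weighted graph $H$, $\mathcal{M}(H)=\sum_{T\in\mathcal{ST}(H)}\prod_{e\in E(T)}w_H(e)$, where $w_H$ denotes the weights of $H$; equivalently (Kirchhoff's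 weighted matrix tree theorem) $\mathcal{M}(H)=\frac{(-1)^{n-1}}{n}\prod_{i=2}^n\lambda_i$, where $n=|V(H)|$ and $\lambda_1=0,\lambda_2,\dots,\lambda_n$ are the eigenvalues of the Laplacian $\mathcal{L}(H)$ (off-diagonal entries the weights, diagonal entries minus the row sums of the weights). *)

From mathcomp Require Import all_boot all_order all_algebra.
Set Implicit Arguments. Unset Strict Implicit. Unset Printing Implicit Defensive.
Import Order.TTheory GRing.Theory Num.Theory.
Local Open Scope ring_scope.

(* A signed graph on vertex set 'I_N is given by a weight function
   g : 'I_N -> 'I_N -> R; {i,j} is an edge iff g i j != 0. *)
Definition signed_graph (R : realFieldType) (N : nat) (g : 'I_N -> 'I_N -> R) :=
  (forall i j, g i j = g j i) /\ (forall i, g i i = 0).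

Section Defs.
Variables (R : realFieldType) (N : nat) (g : 'I_N -> 'I_N -> R).

Definition edges : {set {set 'I_N}} :=
  [set e | [exists i, exists j, (i != j) && (g i j != 0) && (e == [set i; j])]].

Definition connected_rel (e : rel 'I_N) := forall i j, connect e i j.

Definition ncomp (e : rel 'I_N) : nat := n_comp e 'I_N.

Definition pos_rel : rel 'I_N := fun i j => 0 < g i j.
Definition neg_rel : rel 'I_N := fun i j => g i j < 0.
Definition adj_rel : rel 'I_N := fun i j => g i j != 0.

Definition rel_of (F : {set {set 'I_N}}) : rel 'I_N :=
  fun i j => [set i; j] \in F.

Definition spanning_tree (F : {set {set 'I_N}}) : bool :=
  [&& F \subset edges, #|F| == N.-1 &
      [forall i, forall j, connect (rel_of F) i j]].

Definition edge_prod (w : 'I_N -> 'I_N -> R) (F : {set {set 'I_N}}) : R :=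
  \prod_(i : 'I_N) \prod_(j : 'I_N | (i < j)%N && ([set i; j] \in F)) w i j.

Definition piT (F : {set {set 'I_N}}) : R := edge_prod g F.

Definition Mw (w : 'I_N -> 'I_N -> R) : R :=
  \sum_(F : {set {set 'I_N}} | spanning_tree F) edge_prod w F.

Definition gamma_t (t : R) : 'I_N -> 'I_N -> R :=
  fun i j => if 0 < g i j then g i j else t * g i j.

Definition neg_edge (e : {set 'I_N}) : bool :=
  [exists i, exists j, (e == [set i; j]) && (g i j < 0)].

Definition spanning_tree_k (k : nat) (F : {set {set 'I_N}}) : bool :=
  spanning_tree F && (#|[set e in F | neg_edge e]| == k).

Definition coef_a (k : nat) : R :=
  \sum_(F : {set {set 'I_N}} | spanning_tree_k k F) `|piT F|.

End Defs.

From mathcomp Require Import all_boot all_order all_algebra.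
From mathcomp Require Import zify.
Set Implicit Arguments. Unset Strict Implicit. Unset Printing Implicit Defensive.
Import Order.TTheory GRing.Theory Num.Theory.

(* Each edge of Gamma(t) weighs |gamma_ij| or |gamma_ij| (-t) according to its
   sign, so a spanning tree T contributes |pi(T)| (-t)^k, k being its number of
   negative edges.  Gamma_+ together with the k negative edges of T is connected,
   and each added edge joins at most two components into one: c(Gamma_+) <= k + 1.
   Symmetrically, with the N - 1 - k positive edges of T and Gamma_-, we get
   c(Gamma_-) <= N - k.  Both bounds are attained: a connected spanning subgraph
   minimising first its number of negative edges, then its number of edges, is a
   spanning tree whose negative edges are bridges of Gamma_+ plus these edges. *)

Section Components.
Variable T : finType.
Implicit Types (e : rel T) (S : {set {set T}}).

Lemma set2_inj (x y u v : T) : [set x; y] = [set u; v] ->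
  (x = u /\ y = v) \/ (x = v /\ y = u).
Proof.
move=> eq_xy_uv.
have hx : x \in [set u; v] by rewrite -eq_xy_uv set21.
have hy : y \in [set u; v] by rewrite -eq_xy_uv set22.
have hu : u \in [set x; y] by rewrite eq_xy_uv set21.
have hv : v \in [set x; y] by rewrite eq_xy_uv set22.
case/set2P: hx => ex; case/set2P: hy => ey; subst; auto;
  [move/set2P: hv => [] ev | move/set2P: hu => [] ev]; subst; auto.
Qed.

Lemma n_comp_imset (aT : finType) e (f : T -> aT) : connect_sym e ->
  (forall x y, connect e x y = (f x == f y)) -> n_comp e T = #|f @: T|.
Proof.
move=> sym_e connect_f.
have -> : f @: T = f @: [set x | roots e x].
  apply/setP => w; apply/imsetP/imsetP => [[x _ ->]|[x _ ->]]; last by exists x.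
  exists (fingraph.root e x); first by rewrite inE roots_root.
  by apply/eqP; rewrite -connect_f connect_root.
rewrite card_in_imset; first by apply: eq_card => x; rewrite !inE andbT.
move=> x y; rewrite !inE => /eqP rx /eqP ry /eqP.
by rewrite -connect_f -(root_connect sym_e) rx ry => /eqP.
Qed.

Lemma n_comp_connected e (x : T) : connect_sym e ->
  (forall y, connect e x y) -> n_comp e T = 1%N.
Proof.
move=> sym_e conn_x; rewrite -(n_comp_connect sym_e x).
by apply: eq_n_comp_r => y; rewrite !inE conn_x.
Qed.

Lemma n_comp_rel0 : n_comp [rel x y : T | false] T = #|T|.
Proof.
have conn_eq x y : connect [rel x y : T | false] x y = (id x == id y).
  by apply/idP/eqP => [/connectP[[|z p] //= _ ->] | ->].
by rewrite (n_comp_imset (sym_connect_sym _) conn_eq) // card_imset.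
Qed.

Definition rel_with e S : rel T := fun x y => ([set x; y] \in S) || e x y.

Lemma rel_with0 e : rel_with e set0 =2 e.
Proof. by move=> x y; rewrite /rel_with in_set0. Qed.

Lemma rel_with_sym e S : symmetric e -> symmetric (rel_with e S).
Proof. by move=> sym_e x y; rewrite /rel_with setUC sym_e. Qed.

Lemma rel_withU1 e S s : rel_with e (s |: S) =2 rel_with (rel_with e S) [set s].
Proof. by move=> x y; rewrite /rel_with in_setU1 in_set1 orbA. Qed.

Lemma connect_rel_withS e S S' :
  S \subset S' -> subrel (connect (rel_with e S)) (connect (rel_with e S')).
Proof.
move=> sSS'; apply: connect_sub => x y /orP[Sxy | exy]; apply: connect1.
  by rewrite /rel_with (subsetP sSS' _ Sxy).
by rewrite /rel_with exy orbT.
Qed.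

Section AddEdge.
Variables (e : rel T) (u v : T).
Hypothesis sym_e : symmetric e.

Let e' := rel_with e [set [set u; v]].
Let root := fingraph.root e.

Let merged_root z := if root z == root v then root u else root z.

Lemma connect_add_edge x y : connect e' x y = (merged_root x == merged_root y).
Proof.
have csym := sym_connect_sym sym_e.
have csym' := sym_connect_sym (rel_with_sym [set [set u; v]] sym_e).
have e_e' : subrel (connect e) (connect e').
  by apply: connect_sub => a b eab; apply: connect1; rewrite /e' /rel_with eab orbT.
have e'uv : connect e' u v by apply: connect1; rewrite /e' /rel_with set11.
apply/idP/idP => [e'xy | /eqP].
  have cl : closed e' [pred z | merged_root z == merged_root x].
    move=> a b /orP[/set1P/set2_inj[[-> ->] | [-> ->]] | /connect1 /(fingraph.rootP csym) rab].
    - by rewrite !inE /merged_root eqxx if_same.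
    - by rewrite !inE /merged_root eqxx if_same.
    - by rewrite !inE /merged_root /root rab.
  by have := closed_connect cl e'xy; rewrite !inE eqxx eq_sym => <-.
have same_root a b : root a = root b -> connect e' a b.
  by move/(fingraph.rootP csym)/e_e'.
have to_u a : root a = root v -> connect e' a u.
  by move/same_root/connect_trans; apply; rewrite csym'.
rewrite /merged_root; case: eqP => [xv|_]; case: eqP => [yv|_] rxy.
- by apply: connect_trans (to_u _ xv) _; rewrite csym'; apply: to_u.
- by apply: connect_trans (to_u _ xv) (same_root _ _ rxy).
- by apply: connect_trans (same_root _ _ rxy) _; rewrite csym'; apply: to_u.
- exact: same_root.
Qed.

Lemma n_comp_add_edge : n_comp e T = (n_comp e' T + ~~ connect e u v)%N.
Proof.
have csym := sym_connect_sym sym_e.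
have csym' := sym_connect_sym (rel_with_sym [set [set u; v]] sym_e).
rewrite (n_comp_imset csym (f := root)); last by move=> x y; rewrite root_connect.
rewrite (n_comp_imset csym' connect_add_edge).
case: (boolP (connect e u v)) => [/(fingraph.rootP csym) ruv | nuv].
  suff /eq_imset -> : merged_root =1 root by rewrite addn0.
  by move=> z; rewrite /merged_root /root ruv; case: eqP.
have -> : merged_root @: T = (root @: T) :\ root v.
  apply/setP => w; rewrite !inE; apply/imsetP/andP => [[z _ ->] | [wv /imsetP[z _ Ez]]].
    rewrite /merged_root; case: (root z =P root v) => [_ | /eqP rzv]; split => //.
    - by rewrite /root (root_connect csym).
    - by apply/imsetP; exists u.
    - by apply/imsetP; exists z.
  by exists z; rewrite // /merged_root -Ez (negbTE wv).
rewrite (cardsD1 (root v) (root @: T)) addnC.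
suff -> : root v \in root @: T by [].
by apply/imsetP; exists v.
Qed.

Lemma connect_add_redundant_edge : connect e u v -> connect e' =2 connect e.
Proof.
move=> /(fingraph.rootP (sym_connect_sym sym_e)) ruv x y.
have merged_id z : merged_root z = root z by rewrite /merged_root /root -ruv; case: eqP.
by rewrite connect_add_edge !merged_id (root_connect (sym_connect_sym sym_e)).
Qed.

End AddEdge.

Lemma n_comp_rel_withD1 e S u v : symmetric e -> [set u; v] \in S ->
  n_comp (rel_with e (S :\ [set u; v])) T =
  (n_comp (rel_with e S) T + ~~ connect (rel_with e (S :\ [set u; v])) u v)%N.
Proof.
move=> sym_e Suv; rewrite (n_comp_add_edge u v (rel_with_sym _ sym_e)).
congr (_ + _)%N; apply: eq_n_comp; apply: eq_connect => x y.
by rewrite -rel_withU1 setD1K.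
Qed.

Lemma connect_rel_withD1 e S u v : symmetric e -> [set u; v] \in S ->
  connect (rel_with e (S :\ [set u; v])) u v ->
  connect (rel_with e (S :\ [set u; v])) =2 connect (rel_with e S).
Proof.
move=> sym_e Suv conn_uv x y.
rewrite -(connect_add_redundant_edge (rel_with_sym _ sym_e) conn_uv).
by apply: eq_connect => a b; rewrite -rel_withU1 setD1K.
Qed.

Definition pair_sets S := {in S, forall s, exists u v, s = [set u; v]}.

Lemma pair_setsS S S' : S \subset S' -> pair_sets S' -> pair_sets S.
Proof. by move=> sSS' pS' s /(subsetP sSS') /pS'. Qed.

(* Each pair of S joins at most two components into one, and does so exactly
   when it is a bridge of e + S. *)
Lemma n_comp_rel_with_leq e S : symmetric e -> pair_sets S ->
  (n_comp e T <= n_comp (rel_with e S) T + #|S|)%N.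
Proof.
move=> sym_e; have [n] := ubnP #|S|; elim: n S => // n IH S /[!ltnS] leSn pS.
case: (set_0Vmem S) => [-> | [s Ss]].
  by rewrite cards0 addn0 (eq_n_comp (eq_connect (rel_with0 e))).
have [u [v def_s]] := pS s Ss; subst s.
have ltS : (#|S :\ [set u; v]| < n)%N by rewrite (cardsD1 [set u; v] S) Ss in leSn.
have := IH _ ltS (pair_setsS (subD1set _ _) pS).
rewrite (n_comp_rel_withD1 sym_e Ss) (cardsD1 [set u; v] S) Ss addnA => le_eS.
by apply: leq_trans le_eS _; rewrite leq_add2r leq_add2l leq_b1.
Qed.

Lemma n_comp_rel_with_bridges e S : symmetric e -> pair_sets S ->
  (forall u v, [set u; v] \in S -> ~~ connect (rel_with e (S :\ [set u; v])) u v) ->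
  n_comp e T = (n_comp (rel_with e S) T + #|S|)%N.
Proof.
move=> sym_e; have [n] := ubnP #|S|; elim: n S => // n IH S /[!ltnS] leSn pS bridges.
case: (set_0Vmem S) => [-> | [s Ss]].
  by rewrite cards0 addn0 (eq_n_comp (eq_connect (rel_with0 e))).
have [u [v def_s]] := pS s Ss; subst s.
have ltS : (#|S :\ [set u; v]| < n)%N by rewrite (cardsD1 [set u; v] S) Ss in leSn.
rewrite (IH _ ltS (pair_setsS (subD1set _ _) pS)).
  by rewrite (n_comp_rel_withD1 sym_e Ss) bridges // (cardsD1 [set u; v] S) Ss addnA.
move=> x y /setD1P[_ Sxy]; apply: contra (bridges x y Sxy).
by apply: connect_rel_withS; apply: setSD; apply: subD1set.
Qed.

End Components.

Local Open Scope ring_scope.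

Section SignedGraph.
Variables (R : realFieldType) (N : nat) (g : 'I_N -> 'I_N -> R).
Hypothesis g_sym : forall i j, g i j = g j i.
Hypothesis g_diag : forall i, g i i = 0.
Implicit Types F G : {set {set 'I_N}}.

Local Notation E := (edges g).

Lemma mem_edges x y : ([set x; y] \in E) = (x != y) && (g x y != 0).
Proof.
rewrite inE; apply/existsP/andP => [[i /existsP[j /andP[/andP[ij gij] /eqP]]] | [xy gxy]].
  by case/set2_inj => -[-> ->]; rewrite // eq_sym g_sym.
by exists x; apply/existsP; exists y; rewrite xy gxy eqxx.
Qed.

Lemma edges_pair_sets : pair_sets E.
Proof. by move=> s /[!inE] /existsP[i /existsP[j /andP[_ /eqP ->]]]; exists i, j. Qed.

Lemma neg_edge2 x y : neg_edge g [set x; y] = (g x y < 0).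
Proof.
apply/existsP/idP => [[i /existsP[j /andP[/eqP /set2_inj]]] | gxy].
  by case=> -[-> ->]; rewrite // g_sym.
by exists x; apply/existsP; exists y; rewrite eqxx.
Qed.

Lemma rel_ofE F : rel_of F =2 rel_with [rel x y | false] F.
Proof. by move=> x y; rewrite /rel_with orbF. Qed.

Definition spanning_connected F :=
  (F \subset E) && [forall i, forall j, connect (rel_of F) i j].

Lemma spanning_connected_edges :
  connected_rel (adj_rel g) -> spanning_connected E.
Proof.
move=> conn_g; rewrite /spanning_connected subxx.
apply/forallP => i; apply/forallP => j; apply: connect_sub (conn_g i j) => x y gxy.
apply: connect1; rewrite /rel_of mem_edges; move: gxy; rewrite /adj_rel => gxy.
by rewrite gxy andbT; apply: contraNneq gxy => ->; rewrite g_diag.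
Qed.

(* All edges are bridges, so each of them joins two of the N components of the
   empty graph. *)
Lemma spanning_connected_tree F : (0 < N)%N -> spanning_connected F ->
  (forall s, s \in F -> ~~ spanning_connected (F :\ s)) -> spanning_tree g F.
Proof.
move=> N_gt0 /andP[sFE conn_F] minF.
have conn_F' x y : connect (rel_with [rel x y | false] F) x y.
  by rewrite -(eq_connect (rel_ofE F)); move/forallP/(_ x)/forallP: conn_F.
have bridges u v : [set u; v] \in F ->
    ~~ connect (rel_with [rel x y | false] (F :\ [set u; v])) u v.
  move=> Fuv; apply: contra (minF _ Fuv) => conn_uv.
  rewrite /spanning_connected (subset_trans (subD1set _ _) sFE).
  apply/forallP => x; apply/forallP => y; rewrite (eq_connect (rel_ofE _)).
  by rewrite (connect_rel_withD1 _ Fuv conn_uv).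
have sym0 : symmetric [rel x y : 'I_N | false] by [].
have := n_comp_rel_with_bridges sym0 (pair_setsS sFE edges_pair_sets) bridges.
have conn_sym := sym_connect_sym (rel_with_sym F sym0).
rewrite n_comp_rel0 card_ord (n_comp_connected conn_sym (conn_F' (Ordinal N_gt0))).
by move=> cardN; rewrite /spanning_tree sFE conn_F (congr1 predn cardN) add1n eqxx.
Qed.

Lemma spanning_tree_connected F : spanning_tree g F -> spanning_connected F.
Proof. by case/and3P => sFE _ conn_F; rewrite /spanning_connected sFE. Qed.

(* Used with [marked] the negative edges and [rho] = Gamma_+, and the other way round. *)
Section Marked.
Variables (marked : pred {set 'I_N}) (rho : rel 'I_N).
Hypothesis rhoE : forall x y, rho x y = ([set x; y] \in E) && ~~ marked [set x; y].

Definition marked_in F := [set s in F | marked s].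

Lemma marked_in_sub F : marked_in F \subset F.
Proof. by apply/subsetP => s; rewrite inE => /andP[]. Qed.

Lemma rho_sym : symmetric rho.
Proof. by move=> x y; rewrite !rhoE setUC. Qed.

Lemma connect_rel_of_marked F : F \subset E ->
  subrel (connect (rel_of F)) (connect (rel_with rho (marked_in F))).
Proof.
move=> sFE; apply: connect_sub => x y; rewrite /rel_of => Fxy; apply: connect1.
by rewrite /rel_with inE Fxy rhoE (subsetP sFE _ Fxy) /= orbN.
Qed.

Lemma marked_in_pair_sets F : F \subset E -> pair_sets (marked_in F).
Proof. by move=> sFE; apply: pair_setsS (subset_trans (marked_in_sub F) sFE) edges_pair_sets. Qed.

Lemma n_comp_marked_connected F : (0 < N)%N -> spanning_connected F ->
  n_comp (rel_with rho (marked_in F)) 'I_N = 1%N.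
Proof.
move=> N_gt0 /andP[sFE conn_F].
apply: (n_comp_connected (x := Ordinal N_gt0)).
  exact/sym_connect_sym/rel_with_sym/rho_sym.
by move=> y; apply: connect_rel_of_marked => //; move/forallP/(_ (Ordinal N_gt0))/forallP: conn_F.
Qed.

Lemma n_comp_unmarked_leq F : (0 < N)%N -> spanning_tree g F ->
  (ncomp rho <= #|marked_in F|.+1)%N.
Proof.
move=> N_gt0 /spanning_tree_connected conn_F; move: (conn_F) => /andP[sFE _].
have := n_comp_rel_with_leq rho_sym (marked_in_pair_sets sFE).
by rewrite n_comp_marked_connected.
Qed.

(* If a marked edge [u; v] were not a bridge of rho + (marked edges of F), then
   all unmarked edges together with the other marked edges of F would connect. *)
Lemma marked_bridges F : spanning_connected F ->
  (forall G, spanning_connected G -> (#|marked_in F| <= #|marked_in G|)%N) ->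
  forall u v, [set u; v] \in marked_in F ->
  ~~ connect (rel_with rho (marked_in F :\ [set u; v])) u v.
Proof.
move=> /andP[sFE conn_F] min_F u v Suv; apply/negP => conn_uv.
set S := marked_in F; set G := [set s in E | ~~ marked s] :|: (S :\ [set u; v]).
suff /min_F : spanning_connected G.
  have -> : marked_in G = S :\ [set u; v].
    by apply/setP => s; rewrite !inE; case: (marked s); rewrite ?andbF ?andbT.
  by rewrite (cardsD1 [set u; v] S) Suv ltnn.
apply/andP; split.
  rewrite subUset; apply/andP; split; first by rewrite setIdE subsetIl.
  exact: subset_trans (subD1set _ _) (subset_trans (marked_in_sub F) sFE).
apply/forallP => x; apply/forallP => y.
have : connect (rel_with rho S) x y.
  by apply: connect_rel_of_marked => //; move/forallP: conn_F => /(_ x)/forallP.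
rewrite -(connect_rel_withD1 rho_sym Suv conn_uv).
apply: connect_sub => a b /orP[Sab | rab]; apply: connect1; rewrite /rel_of inE.
  by rewrite Sab orbT.
by rewrite inE -rhoE rab.
Qed.

(* Minimise first the number of marked edges, then the number of edges, among
   connected spanning subgraphs. *)
Lemma exists_tree_min_marked : (0 < N)%N -> connected_rel (adj_rel g) ->
  exists2 F, spanning_tree g F & #|marked_in F|.+1 = ncomp rho.
Proof.
move=> N_gt0 conn_g.
have [F1 conn_F1 min_F1] := arg_minnP (fun F => #|marked_in F|) (spanning_connected_edges conn_g).
pose P F := spanning_connected F && (#|marked_in F| == #|marked_in F1|).
have [|F /andP[conn_F /eqP mF] min_F] := @arg_minnP _ F1 P (fun F => #|F|).
  by rewrite /P conn_F1 eqxx.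
have min_marked G : spanning_connected G -> (#|marked_in F| <= #|marked_in G|)%N.
  by rewrite mF; apply: min_F1.
have tree_F : spanning_tree g F.
  apply: spanning_connected_tree => // s Fs; apply/negP => conn_Fs.
  have sub_marked : marked_in (F :\ s) \subset marked_in F.
    by apply/subsetP => e; rewrite !inE => /andP[/andP[_ ->] ->].
  have /min_F : P (F :\ s).
    rewrite /P conn_Fs -mF eqn_leq subset_leq_card //=.
    exact: min_marked.
  by rewrite (cardsD1 s F) Fs ltnn.
exists F => //; have /andP[sFE _] := conn_F.
rewrite /ncomp (n_comp_rel_with_bridges rho_sym (marked_in_pair_sets sFE)).
  by rewrite n_comp_marked_connected.
exact: marked_bridges.
Qed.

End Marked.

Definition kneg F := #|[set e in F | neg_edge g e]|.

Lemma pos_relE x y :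
  pos_rel g x y = ([set x; y] \in E) && ~~ neg_edge g [set x; y].
Proof.
rewrite mem_edges neg_edge2 /pos_rel; have [-> | _] := eqVneq x y.
  by rewrite g_diag ltxx.
by rewrite lt0r -leNgt.
Qed.

Lemma neg_relE x y :
  neg_rel g x y = ([set x; y] \in E) && ~~ ~~ neg_edge g [set x; y].
Proof.
rewrite mem_edges neg_edge2 negbK /neg_rel; have [-> | _] := eqVneq x y.
  by rewrite g_diag ltxx.
by rewrite /= andb_idl // => /lt_eqF ->.
Qed.

Lemma kneg_add_marked_pos F :
  (kneg F + #|marked_in (fun e => ~~ neg_edge g e) F|)%N = #|F|.
Proof.
rewrite -(cardsID [set e | neg_edge g e] F) setDE /kneg /marked_in.
by congr (_ + _)%N; apply: eq_card => e; rewrite !inE.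
Qed.

Lemma edge_prodE (w : 'I_N -> 'I_N -> R) F : edge_prod w F =
  \prod_(p : 'I_N * 'I_N | (p.1 < p.2)%N && ([set p.1; p.2] \in F)) w p.1 p.2.
Proof. by rewrite /edge_prod pair_big_dep. Qed.

Lemma card_ordered_edges F : F \subset E ->
  #|[set p : 'I_N * 'I_N | (p.1 < p.2)%N && ([set p.1; p.2] \in F)]| = #|F|.
Proof.
move=> sFE; rewrite -(card_in_imset (f := fun p => [set p.1; p.2])); last first.
  move=> [a b] [c d] /[!inE] /andP[/= ab _] /andP[/= cd _] /set2_inj[[-> ->] // | [ad bc]].
  by move: ab; rewrite ad bc ltnNge (ltnW cd).
apply: eq_card => e; apply/imsetP/idP => [[p /[!inE] /andP[_ Fp] ->] // | Fe].
have := subsetP sFE _ Fe; rewrite inE => /existsP[a /existsP[b /andP[/andP[ab _] /eqP def_e]]].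
case: (ltngtP a b) => [lt_ab | lt_ba | /val_inj eq_ab]; last by rewrite eq_ab eqxx in ab.
  by exists (a, b); rewrite // inE /= lt_ab -def_e Fe.
by exists (b, a); [rewrite inE /= lt_ba setUC -def_e Fe | rewrite def_e setUC].
Qed.

Lemma piT_neq0 F : F \subset E -> piT g F != 0.
Proof.
move=> sFE; rewrite /piT edge_prodE; apply/prodf_neq0 => p /andP[_ /(subsetP sFE)].
by rewrite mem_edges => /andP[].
Qed.

(* Each edge of Gamma(t) contributes |gamma_ij| times -t or 1, according to its sign. *)
Lemma edge_prod_gamma_t t F : F \subset E ->
  edge_prod (gamma_t g t) F = `|piT g F| * (- t) ^+ kneg F.
Proof.
move=> sFE; rewrite /piT !edge_prodE normr_prod.
rewrite (eq_bigr (fun p => `|g p.1 p.2| * (if g p.1 p.2 < 0 then - t else 1))); last first.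
  move=> p /andP[_ /(subsetP sFE)]; rewrite mem_edges /gamma_t => /andP[_].
  by case: ltrgt0P => // _ _; rewrite ?mulr1 // mulrNN mulrC.
rewrite big_split -big_mkcondr prodr_const /=; congr (_ * _ ^+ _).
rewrite /kneg -(card_ordered_edges (F := [set e in F | neg_edge g e])); last first.
  exact: subset_trans (marked_in_sub _ F) sFE.
by apply: eq_card => p; rewrite !inE neg_edge2 andbA.
Qed.

Lemma coef_a_gt0 k : (exists2 F, spanning_tree g F & kneg F = k) -> 0 < coef_a g k.
Proof.
case=> F tree_F kF; rewrite /coef_a (bigD1 F) /=; last by rewrite /spanning_tree_k tree_F -kF /=.
rewrite ltr_pwDl ?sumr_ge0 // normr_gt0 piT_neq0 //.
by case/and3P: tree_F.
Qed.

Section Bounds.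
Hypothesis N_gt0 : (0 < N)%N.
Let cp := ncomp (pos_rel g).
Let cm := ncomp (neg_rel g).

Lemma kneg_bounds F : spanning_tree g F -> (cp.-1 <= kneg F <= N - cm)%N.
Proof.
move=> tree_F; have := kneg_add_marked_pos F.
have := n_comp_unmarked_leq pos_relE N_gt0 tree_F.
have := n_comp_unmarked_leq (marked := fun e => ~~ neg_edge g e) neg_relE N_gt0 tree_F.
case/and3P: tree_F => _ /eqP -> _; rewrite /marked_in /kneg -/cp -/cm; lia.
Qed.

Lemma Mw_gamma_t t :
  Mw g (gamma_t g t) = \sum_(cp.-1 <= k < (N - cm).+1) coef_a g k * (- t) ^+ k.
Proof.
rewrite /Mw (eq_bigr (fun F => `|piT g F| * (- t) ^+ kneg F)); last first.
  by move=> F /and3P[sFE _ _]; apply: edge_prod_gamma_t.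
under [RHS]eq_bigr do rewrite /coef_a mulr_suml.
rewrite (exchange_big_dep (spanning_tree g)) /=; last by move=> k F _ /andP[].
apply: eq_bigr => F tree_F.
rewrite (eq_bigl (eq_op^~ (kneg F))) => [|k]; last by rewrite /spanning_tree_k tree_F eq_sym.
by rewrite big_nat1_eq ltnS kneg_bounds.
Qed.

Hypothesis conn_g : connected_rel (adj_rel g).

Lemma exists_tree_kneg_min : exists2 F, spanning_tree g F & kneg F = cp.-1.
Proof.
have [F tree_F cardF] := exists_tree_min_marked pos_relE N_gt0 conn_g.
by exists F; rewrite // /cp -cardF.
Qed.

Lemma exists_tree_kneg_max : exists2 F, spanning_tree g F & kneg F = (N - cm)%N.
Proof.
have [F tree_F cardF] :=
  exists_tree_min_marked (marked := fun e => ~~ neg_edge g e) neg_relE N_gt0 conn_g.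
exists F => //; have := kneg_add_marked_pos F.
case/and3P: tree_F => _ /eqP -> _; rewrite /cm -cardF; lia.
Qed.

End Bounds.

End SignedGraph.

Theorem mainTheorem3 (R : realFieldType) (N : nat) (g : 'I_N -> 'I_N -> R) :
  (0 < N)%N ->
  signed_graph g ->
  connected_rel (adj_rel g) ->
  let cp := ncomp (pos_rel g) in
  let cm := ncomp (neg_rel g) in
  [/\ (forall t : R,
         Mw g (gamma_t g t) =
         \sum_(cp.-1 <= k < (N - cm).+1) coef_a g k * (- t) ^+ k),
      (forall k, 0 <= coef_a g k),
      0 < coef_a g cp.-1 &
      0 < coef_a g (N - cm)].
Proof.
move=> N_gt0 [g_sym g_diag] conn_g cp cm; split.
- exact: Mw_gamma_t.
- by move=> k; apply: sumr_ge0 => F _; apply: normr_ge0.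
- exact/coef_a_gt0/exists_tree_kneg_min.
- exact/coef_a_gt0/exists_tree_kneg_max.
Qed.
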